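(* Up to graph isomorphism, there is exactly one graph with exactly three vertices that is isomorphic to $\Gamma_E(R)$ for some commutative Noetherian ring $R$ with unity.
   Context: For $x,y\in R$ write $x\sim y$ iff $\operatorname{ann}(x)=\operatorname{ann}(y)$; $[x]$ denotes the equivalence class of $x$. Let $Z^*(R)$ be the set of nonzero zero divisors of $R$. The graph $\Gamma_E(R)$ is the simple graph whose vertices are the classes $[x]$ with $x\in Z^*(R)$, two distinct vertices $[x],[y]$ being adjacent iff $xy=0$ (this is independent of representatives). *)

From HB Require Import structures.
From mathcomp Require Import all_boot all_algebra.
Set Implicit Arguments. Unset Strict Implicit. Unset Printing Implicit Defensive.
Import GRing.Theory.
Local Open Scope ring_scope.

(* Ideals of a commutative ring, as predicates (closure under negation
   follows from closure under multiplication by -1). *)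
Definition is_ideal (R : comNzRingType) (I : R -> Prop) : Prop :=
  I 0 /\ (forall x y, I x -> I y -> I (x + y)) /\ (forall r x, I x -> I (r * x)).

Definition noetherian (R : comNzRingType) : Prop :=
  forall I : nat -> R -> Prop,
    (forall n, is_ideal (I n)) ->
    (forall n x, I n x -> I n.+1 x) ->
    exists N : nat, forall n x, (N <= n)%N -> I n x -> I N x.

Definition nz_zero_divisor (R : comNzRingType) (x : R) : Prop :=
  x <> 0 /\ exists y : R, y <> 0 /\ x * y = 0.

Definition ann_equiv (R : comNzRingType) (x y : R) : Prop :=
  forall z : R, x * z = 0 <-> y * z = 0.

Definition simple_graph (n : nat) (G : rel 'I_n) : Prop :=
  (forall i, ~~ G i i) /\ (forall i j, G i j = G j i).

Definition graph_iso (n : nat) (G1 G2 : rel 'I_n) : Prop :=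
  exists f : 'I_n -> 'I_n, bijective f /\ forall i j, G1 i j = G2 (f i) (f j).

(* Gamma_E(R) is isomorphic to G : rel 'I_n, given via a choice of
   representatives f i of the n vertices (classes [f i]): the map i |-> [f i]
   is a bijection from 'I_n onto the vertex set {[x] | x in Z^*(R)}, and
   it maps edges to edges:  G i j  iff  [f i] <> [f j] and f i * f j = 0. *)
Definition gammaE_iso (R : comNzRingType) (n : nat) (G : rel 'I_n) : Prop :=
  exists f : 'I_n -> R,
    (forall i, nz_zero_divisor (f i)) /\
    (forall i j, ann_equiv (f i) (f j) -> i = j) /\
    (forall x, nz_zero_divisor x -> exists i, ann_equiv x (f i)) /\
    (forall i j, G i j <-> (i <> j /\ f i * f j = 0)).

Definition realizable (n : nat) (G : rel 'I_n) : Prop :=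
  exists R : comNzRingType, noetherian R /\ gammaE_iso R G.

(** Uniqueness: on three vertices, [Gamma_E(R)] has no isolated vertex
    (an isolated vertex would annihilate itself, and a common annihilator of
    it and any other vertex then forces an edge) and is not a triangle (in a
    complete [Gamma_E(R)] the sum of two vertices is again a zero divisor,
    which makes one of them square to zero, and two square-zero vertices of a
    complete graph both have annihilator [Z(R)]).  Hence it is the path
    [P_3], a star; this holds for every commutative ring.  Existence: in
    [Z/16] the classes of [2], [4], [8] are the three vertices and [8] is the
    centre. *)
From mathcomp Require Import all_boot all_algebra all_fingroup.
From mathcomp Require Import boolp.
Set Implicit Arguments. Unset Strict Implicit. Unset Printing Implicit Defensive.
Import GRing.Theory.
Local Open Scope ring_scope.

Lemma finite_chain_stationary (T : finType) (I : nat -> T -> Prop) :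
  (forall n x, I n x -> I n.+1 x) ->
  exists N : nat, forall n x, (N <= n)%N -> I n x -> I N x.
Proof.
move=> incrI; pose S n := [set x | `[< I n x >]].
have homoS : {homo S : m n / (m <= n)%N >-> m \subset n}.
  apply: homo_leq => [m | m k l | m]; [exact: subxx | exact: subset_trans |].
  by apply/subsetP => x; rewrite !inE => /asboolP /incrI /asboolP.
pose P k := `[< exists n, #|S n| = k >].
have exP : exists k, P k by exists #|S 0%N|; apply/asboolP; exists 0%N.
have leP k : P k -> (k <= #|T|)%N by move=> /asboolP [n <-]; apply: max_card.
case: (ex_maxnP exP leP) => _ /asboolP [N <-] maxN.
exists N => n x le_Nn Inx.
have /eqP SNn : S N == S n.
  by rewrite eqEcard homoS // maxN //; apply/asboolP; exists n.
have : x \in S n by rewrite inE; apply/asboolP.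
by rewrite -SNn inE => /asboolP.
Qed.

Lemma finite_noetherian (R : finComNzRingType) : noetherian R.
Proof. by move=> I _; apply: finite_chain_stationary. Qed.

Lemma nz_zero_divisor_mul0 (R : comNzRingType) (x y : R) :
  x <> 0 -> y <> 0 -> x * y = 0 -> nz_zero_divisor x.
Proof. by move=> x0 y0 xy; split=> //; exists y. Qed.

Lemma common_annihilator (R : comNzRingType) (x y : R) :
  x * x = 0 -> nz_zero_divisor y -> exists e, [/\ e <> 0, x * e = 0 & y * e = 0].
Proof.
move=> xx0 [_ [t [t0 yt0]]].
have [xt0 | /eqP xt_neq0] := eqVneq (x * t) 0; first by exists t.
by exists (x * t); rewrite mulrA xx0 mul0r mulrCA yt0 mulr0.
Qed.

Section Transversal.
Variables (R : comNzRingType) (n : nat) (f : 'I_n -> R).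
Hypothesis f_zd : forall i, nz_zero_divisor (f i).
Hypothesis f_inj : forall i j, ann_equiv (f i) (f j) -> i = j.
Hypothesis f_onto : forall x, nz_zero_divisor x -> exists i, ann_equiv x (f i).

Lemma f_neq0 i : f i <> 0. Proof. by case: (f_zd i). Qed.

Lemma annihilator_rep x y :
  x <> 0 -> y <> 0 -> x * y = 0 -> exists2 m, ann_equiv y (f m) & f m * x = 0.
Proof.
move=> x0 y0 xy0; have yx0 : y * x = 0 by rewrite mulrC.
have [m ym] := f_onto (nz_zero_divisor_mul0 y0 x0 yx0).
by exists m => //; apply/(ym x).1.
Qed.

Lemma isolated_mul0 i : (forall j, j != i -> f i * f j <> 0) -> f i * f i = 0.
Proof.
move=> isol; have [_ [y [y0 fiy0]]] := f_zd i.
have [m _ fmfi0] := annihilator_rep (@f_neq0 i) y0 fiy0.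
by case: (eqVneq m i) fmfi0 => [-> // | /isol fifm_neq0]; rewrite mulrC.
Qed.

Lemma exists_neighbour i k : k != i -> exists2 j, j != i & f i * f j = 0.
Proof.
move=> ki; have [/existsP [j /andP [ji /eqP]] | /existsPn isol] :=
  boolP [exists j, (j != i) && (f i * f j == 0)]; first by exists j.
have {}isol j : j != i -> f i * f j <> 0.
  by move=> ji /eqP fifj0; move: (isol j); rewrite ji fifj0.
have [e [e0 fie0 fke0]] := common_annihilator (isolated_mul0 isol) (f_zd k).
have [m em fmfi0] := annihilator_rep (@f_neq0 i) e0 fie0.
have mi : m = i by apply/eqP; apply: contraPT fmfi0 => /isol; rewrite mulrC.
by case: (isol k ki); rewrite -mi; apply/(em (f k)).1; rewrite mulrC.
Qed.

Section Complete.
Hypothesis f_complete : forall p q, p != q -> f p * f q = 0.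

Lemma complete_mul0_pair i j k :
  i != j -> k != i -> k != j -> f i * f i = 0 \/ f j * f j = 0.
Proof.
move=> ij ki kj; set s := f i + f j.
have s0 : s <> 0.
  move=> s0; move/eqP: ij; apply; apply: f_inj => z.
  have -> : f j = - f i by apply/eqP; rewrite -addr_eq0 addrC; apply/eqP.
  by rewrite mulNr; split=> [-> | /eqP]; rewrite ?oppr0 // oppr_eq0 => /eqP.
have sfk0 : s * f k = 0 by rewrite mulrDl !f_complete ?addr0 // eq_sym.
have [m sm] := f_onto (nz_zero_divisor_mul0 s0 (@f_neq0 k) sfk0).
case: (eqVneq m i) sm => [-> | mi] sm.
- right; have := (sm (f j)).2 (f_complete ij).
  by rewrite mulrDl f_complete ?add0r.
- left; have := (sm (f i)).2 (f_complete mi).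
  by rewrite mulrDl (f_complete (p := j)) ?addr0 // eq_sym.
Qed.

Lemma mul0_annihilates_zero_divisors p :
  f p * f p = 0 -> forall z, nz_zero_divisor z -> f p * z = 0.
Proof.
move=> fp0 z /f_onto [m zm]; rewrite mulrC; apply/(zm (f p)).2.
by have [-> | /f_complete] := eqVneq m p.
Qed.

Lemma complete_mul0_unique i j : f i * f i = 0 -> f j * f j = 0 -> i = j.
Proof.
move=> fi0 fj0; apply: f_inj => z.
have [-> | /eqP z0] := eqVneq z 0; first by rewrite !mulr0.
have zd (p : 'I_n) : f p * z = 0 -> nz_zero_divisor z.
  by move=> fpz0; apply: (nz_zero_divisor_mul0 z0 (@f_neq0 p)); rewrite mulrC.
split=> [/zd | /zd]; exact: mul0_annihilates_zero_divisors.
Qed.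

End Complete.

Lemma not_complete (a b c : 'I_n) : a != b -> b != c -> a != c ->
  ~ (forall p q, p != q -> f p * f q = 0).
Proof.
move=> ab bc ac compl; have mul0_unique := complete_mul0_unique compl.
have ca : c != a by rewrite eq_sym.
have cb : c != b by rewrite eq_sym.
have ba : b != a by rewrite eq_sym.
case: (complete_mul0_pair compl ab ca cb) => [a0 | b0].
- case: (complete_mul0_pair compl bc ab ac) => [b0 | c0].
  + by move/eqP: ab; apply; apply: mul0_unique.
  + by move/eqP: ac; apply; apply: mul0_unique.
- case: (complete_mul0_pair compl ac ba bc) => [a0 | c0].
  + by move/eqP: ab; apply; apply: mul0_unique.
  + by move/eqP: bc; apply; apply: mul0_unique.
Qed.

End Transversal.

Definition star n (c : 'I_n) : rel 'I_n := fun i j => (i == c) != (j == c).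

Lemma star_simple n (c : 'I_n) : simple_graph (star c).
Proof. by split=> [i | i j]; rewrite /star ?eqxx // eq_sym. Qed.

Lemma graph_iso_star n (G1 G2 : rel 'I_n) (c1 c2 : 'I_n) :
  G1 =2 star c1 -> G2 =2 star c2 -> graph_iso G1 G2.
Proof.
move=> G1E G2E; exists (tperm c1 c2).
split; first exact: inv_bij (tpermK c1 c2).
have tperm_eq2 x : (tperm c1 c2 x == c2) = (x == c1).
  apply/eqP/eqP => [tx | ->]; last exact: tpermL.
  by rewrite -(tpermK c1 c2 x) tx tpermR.
by move=> i j; rewrite G1E G2E /star !tperm_eq2.
Qed.

Lemma ord3_third (a b : 'I_3) :
  a != b -> exists c, [/\ c != a, c != b & forall x, [|| x == a, x == b | x == c]].
Proof.
move=> ab; have /cards1P [c Ec] : #|~: [set a; b]| == 1%N.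
  by rewrite -(eqn_add2l #|[set a; b]|) cardsC cards2 ab card_ord.
have inc x : (x == c) = (x \notin [set a; b]) by rewrite -in_set1 -Ec inE.
have := inc c; rewrite eqxx in_set2 => /esym/norP [ca cb].
by exists c; split=> // x; rewrite inc in_set2 orbA orbN.
Qed.

Lemma ord3_star (e : rel 'I_3) (a b : 'I_3) :
  irreflexive e -> symmetric e -> a != b -> ~~ e a b ->
  (exists j, e a j) -> (exists j, e b j) -> exists c, e =2 star c.
Proof.
move=> irr sym ab nab [ja eaja] [jb ebjb].
have [c [ca cb cover]] := ord3_third ab.
have nba : ~~ e b a by rewrite sym.
have eac : e a c.
  by case/or3P: (cover ja) eaja => /eqP->; rewrite ?irr ?(negbTE nab).
have ebc : e b c.
  by case/or3P: (cover jb) ebjb => /eqP->; rewrite ?irr ?(negbTE nba).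
have [ac bc] : (a == c) = false /\ (b == c) = false.
  by rewrite !(eq_sym _ c) (negbTE ca) (negbTE cb).
exists c => i j; rewrite /star.
by case/or3P: (cover i) => /eqP->; case/or3P: (cover j) => /eqP->;
  rewrite ?irr ?eqxx ?ac ?bc ?(negbTE nab) ?(negbTE nba)
          ?(sym c a) ?(sym c b) ?eac ?ebc.
Qed.

Lemma gammaE3_star (R : comNzRingType) (G : rel 'I_3) :
  gammaE_iso R G -> exists c, G =2 star c.
Proof.
move=> [f [f_zd [f_inj [f_onto GE]]]].
pose e i j := (i != j) && (f i * f j == 0).
have Ge : G =2 e.
  move=> i j; apply/idP/andP => [/GE [/eqP ij /eqP] | [/eqP ij /eqP fifj0]] //.
  exact/GE.
have /forallPn [a /forallPn [b]] :
    ~~ [forall a : 'I_3, forall b : 'I_3, (a != b) ==> (f a * f b == 0)].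
  apply/negP => /forallP complete.
  apply: (not_complete f_zd f_inj f_onto (a := 0) (b := 1) (c := 2%:R)) => //.
  move=> p q pq.
  by apply/eqP; move: (complete p) => /forallP /(_ q); rewrite pq.
rewrite negb_imply => /andP [ab nab].
have irr_e : irreflexive e by move=> i; rewrite /e eqxx.
have sym_e : symmetric e by move=> i j; rewrite /e eq_sym mulrC.
have neighbour i k : k != i -> exists j, e i j.
  move=> /(exists_neighbour f_zd f_onto) [j ji fifj0].
  by exists j; rewrite /e eq_sym ji fifj0 eqxx.
have nab_e : ~~ e a b by rewrite /e negb_and nab orbT.
have ba : b != a by rewrite eq_sym.
have [c ec] :=
  ord3_star irr_e sym_e ab nab_e (neighbour a b ba) (neighbour b a ab).
by exists c => i j; rewrite Ge ec.
Qed.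

(* [enum] of a finType does not reduce, so finite checks are run over an
   explicit list of the elements, where they can be decided by computation. *)
Section ListedRing.
Variables (R : comNzRingType) (elts : seq R).
Hypothesis elts_full : forall x, x \in elts.

Definition ann_equivb (x y : R) :=
  all (fun z => (x * z == 0) == (y * z == 0)) elts.

Definition nz_zero_divisorb (x : R) :=
  (x != 0) && has (fun y => (y != 0) && (x * y == 0)) elts.

Lemma ann_equivP x y : reflect (ann_equiv x y) (ann_equivb x y).
Proof.
apply: (iffP allP) => [xy z | xy z _].
  move/eqP: (xy z (elts_full z)) => xyz.
  by split=> /eqP; [rewrite xyz | rewrite -xyz] => /eqP.
by apply/eqP; apply/eqP/eqP => /(xy z).
Qed.

Lemma nz_zero_divisorP x : reflect (nz_zero_divisor x) (nz_zero_divisorb x).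
Proof.
apply: (iffP andP) => [[/eqP x0 /hasP [y _ /andP [/eqP y0 /eqP xy0]]] | ].
  by split=> //; exists y.
move=> [/eqP x0 [y [y0 xy0]]].
by split=> //; apply/hasP; exists y => //; apply/andP; split; apply/eqP.
Qed.

Lemma gammaE_iso_of_listed n (idx : seq 'I_n) (G : rel 'I_n) (f : 'I_n -> R) :
  (forall i, i \in idx) ->
  all (fun i => nz_zero_divisorb (f i)) idx ->
  all (fun i => all (fun j => ann_equivb (f i) (f j) ==> (i == j)) idx) idx ->
  all (fun x => nz_zero_divisorb x ==> has (fun i => ann_equivb x (f i)) idx) elts ->
  all (fun i => all (fun j => G i j == (i != j) && (f i * f j == 0)) idx) idx ->
  gammaE_iso R G.
Proof.
move=> idx_full /allP f_zd /allP f_inj /allP f_onto /allP GE.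
exists f; split; [|split; [|split]].
- by move=> i; apply/nz_zero_divisorP/f_zd.
- move=> i j /ann_equivP fij; apply/eqP.
  by move/allP/(_ j (idx_full j)): (f_inj i (idx_full i)); rewrite fij.
- move=> x /nz_zero_divisorP zx.
  have /hasP [i _ /ann_equivP] := implyP (f_onto x (elts_full x)) zx.
  by exists i.
- move=> i j; move/allP/(_ j (idx_full j))/eqP: (GE i (idx_full i)) ->.
  by split=> [/andP [/eqP ij /eqP] | [/eqP ij /eqP fij]] //; rewrite ij fij.
Qed.

End ListedRing.

Lemma mem_inZp_iota n (x : 'I_n.+1) : x \in map inZp (iota 0 n.+1).
Proof. by rewrite -(valZpK x) map_f // mem_iota ltn_ord. Qed.

Definition pow2 (i : 'I_3) : 'Z_16 := (2 ^ i.+1)%:R.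

Lemma gammaE_iso_Z16 : gammaE_iso 'Z_16 (star (ord_max : 'I_3)).
Proof.
apply: (gammaE_iso_of_listed (@mem_inZp_iota 15) (@mem_inZp_iota 2)
          (f := pow2)); by vm_compute.
Qed.

Theorem corollary1p6 :
  (exists G : rel 'I_3, simple_graph G /\ realizable G) /\
  (forall G1 G2 : rel 'I_3, simple_graph G1 -> simple_graph G2 ->
     realizable G1 -> realizable G2 -> graph_iso G1 G2).
Proof.
split.
  exists (star ord_max); split; first exact: star_simple.
  by exists 'Z_16%type; split; [exact: finite_noetherian | exact: gammaE_iso_Z16].
move=> G1 G2 _ _ [R1 [_ /gammaE3_star [c1 G1E]]].
move=> [R2 [_ /gammaE3_star [c2 G2E]]].
exact: graph_iso_star G1E G2E.
Qed.
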